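(* Let $T=(p,q:F\to E)$ be a textile system in which $F$ is source-free, $q|_{F^0}:F^0\to E^0$ is onto, and $q$ has $r$-path lifting. Then $\mathsf X^+_T$ is nonempty.
   Context: Directed graph $F=(F^0,F^1,r,s)$; source-free means $r:F^1\to F^0$ is onto. Textile system $T=(p,q:F\to E)$: graph homomorphisms $p,q$ (commuting with $r,s$) with $f\mapsto(r(f),p(f),s(f),q(f))$ injective on $F^1$. $q$ has $r$-path lifting if for all $v\in F^0$, $e\in E^1$ with $q(v)=r(e)$ there exists (not necessarily unique) $f\in F^1$ with $q(f)=e$ and $r(f)=v$. $\mathsf X^+_T=\{x:\mathbb N^2\to F^1: s(x_n)=r(x_{n+\varepsilon_1}),\ p(x_n)=q(x_{n+\varepsilon_2})\ \forall n\in\mathbb N^2\}$, $\mathbb N=\{0,1,\dots\}$. *)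

Set Implicit Arguments.

Record graph := Graph {
  vert : Type;
  edge : Type;
  rg   : edge -> vert;
  sc   : edge -> vert }.
Arguments rg {g} _.
Arguments sc {g} _.

Definition source_free (F : graph) : Prop :=
  forall v : vert F, exists f : edge F, rg f = v.

Record graph_hom (F E : graph) := GraphHom {
  hv : vert F -> vert E;
  he : edge F -> edge E;
  hom_rg : forall f, rg (he f) = hv (rg f);
  hom_sc : forall f, sc (he f) = hv (sc f) }.
Arguments hv {F E} _ _.
Arguments he {F E} _ _.

Definition textile_system (F E : graph) (p q : graph_hom F E) : Prop :=
  forall f g : edge F,
    rg f = rg g -> he p f = he p g -> sc f = sc g -> he q f = he q g -> f = g.

Definition r_path_lifting (F E : graph) (q : graph_hom F E) : Prop :=
  forall (v : vert F) (e : edge E), hv q v = rg e ->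
    exists f : edge F, he q f = e /\ rg f = v.

(** X^+_T, with N^2 = nat * nat, eps1 = (1,0), eps2 = (0,1). *)
Definition in_XplusT (F E : graph) (p q : graph_hom F E)
    (x : nat * nat -> edge F) : Prop :=
  forall i j : nat,
    sc (x (i, j)) = rg (x (S i, j)) /\
    he p (x (i, j)) = he q (x (i, S j)).

(* The rows of a point of X^+_T are infinite paths in F, and row j+1 must lift
   the p-image of row j along q.  Source-freeness yields a first row, the
   lifting hypotheses lift every infinite path of E along q, and dependent
   choice stacks the rows. *)

From Stdlib Require Import IndefiniteDescription.

Lemma dependent_choice_seq {A : Type} (P : nat -> A -> Prop)
    (R : nat -> A -> A -> Prop) :
  (exists a, P 0 a) ->
  (forall n a, P n a -> exists b, P (S n) b /\ R n a b) ->
  exists x : nat -> A, forall n, P n (x n) /\ R n (x n) (x (S n)).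
Proof.
  intros [a0 Ha0] Hstep.
  set (step := fun n (a : {a | P n a}) =>
         constructive_indefinite_description _ (Hstep n _ (proj2_sig a))).
  set (seq := fix seq (n : nat) : {a | P n a} :=
         match n with
         | 0 => exist _ a0 Ha0
         | S n => let (b, Hb) := step n (seq n) in exist _ b (proj1 Hb)
         end).
  exists (fun n => proj1_sig (seq n)); intro n; split.
  - exact (proj2_sig (seq n)).
  - simpl; destruct (step n (seq n)) as [b [? Hb]]; exact Hb.
Qed.

(* Edges are composed right to left: [s (x i) = r (x (i+1))]. *)
Definition inf_path (G : graph) (x : nat -> edge G) : Prop :=
  forall i, sc (x i) = rg (x (S i)).
Arguments inf_path {G} x.

Lemma inf_path_hom {F E : graph} (h : graph_hom F E) {x : nat -> edge F} :
  inf_path x -> inf_path (fun i => he h (x i)).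
Proof. intros Hx i; rewrite hom_sc, hom_rg, Hx; reflexivity. Qed.

Lemma source_free_inf_path {F : graph} :
  source_free F -> inhabited (vert F) -> exists x : nat -> edge F, inf_path x.
Proof.
  intros Hsf [v].
  destruct (dependent_choice_seq (fun _ _ => True)
              (fun _ (f g : edge F) => sc f = rg g)) as [x Hx].
  - destruct (Hsf v) as [f _]; exists f; exact I.
  - intros n f _; destruct (Hsf (sc f)) as [g Hg]; exists g; auto.
  - exists x; intro i; apply Hx.
Qed.

Lemma r_path_lifting_inf_path {F E : graph} {q : graph_hom F E} :
  r_path_lifting q -> (forall w : vert E, exists v : vert F, hv q v = w) ->
  forall y : nat -> edge E, inf_path y ->
  exists x : nat -> edge F, inf_path x /\ forall i, he q (x i) = y i.
Proof.
  intros Hlift Honto y Hy.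
  destruct (dependent_choice_seq (fun n f => he q f = y n)
              (fun _ (f g : edge F) => sc f = rg g)) as [x Hx].
  - destruct (Honto (rg (y 0))) as [v Hv].
    destruct (Hlift v (y 0) Hv) as [f [Hf _]]; exists f; exact Hf.
  - intros n f Hf.
    assert (Hsc : hv q (sc f) = rg (y (S n))).
    { rewrite <- hom_sc, Hf; apply Hy. }
    destruct (Hlift _ _ Hsc) as [g [Hg Hrg]]; exists g; auto.
  - exists x; split; intro i; apply Hx.
Qed.

Theorem theorem3p6 (F E : graph) (p q : graph_hom F E)
  (HT : textile_system p q)
  (HF0 : inhabited (vert F))
  (Hsf : source_free F)
  (Honto : forall w : vert E, exists v : vert F, hv q v = w)
  (Hlift : r_path_lifting q) :
  exists x : nat * nat -> edge F, in_XplusT p q x.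
Proof.
  destruct (dependent_choice_seq (fun _ (row : nat -> edge F) => inf_path row)
              (fun _ row row' => forall i, he p (row i) = he q (row' i)))
    as [rows Hrows].
  - exact (source_free_inf_path Hsf HF0).
  - intros n row Hrow.
    destruct (r_path_lifting_inf_path Hlift Honto _ (inf_path_hom p Hrow))
      as [row' [Hrow' Hq]].
    exists row'; split; [exact Hrow' | intro i; symmetry; apply Hq].
  - exists (fun ij => rows (snd ij) (fst ij)); intros i j; split; apply Hrows.
Qed.
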